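(* Let $n\ge 3$ be an odd integer and $k\ge 3$ an integer. Then $\psi(C_n\square P_k)=3$, i.e. the minimum size of a doubly resolving set of the cartesian product $C_n\square P_k$ is $3$.
   Context: All graphs are finite and connected; $d(u,v)$ is the shortest-path distance. $C_n$ is the cycle on $n$ vertices and $P_k$ the path on $k$ vertices. The cartesian product $G\square H$ has vertex set $V(G)\times V(H)$, with $(g_1,h_1)$ adjacent to $(g_2,h_2)$ iff either $h_1=h_2$ and $g_1g_2\in E(G)$, or $g_1=g_2$ and $h_1h_2\in E(H)$. For an ordered set $Q=\{q_1,\dots,q_l\}$ of vertices, $r(x|Q)=(d(x,q_1),\dots,d(x,q_l))$. $Q$ is a doubly resolving set of $G$ if for any two distinct vertices $x,y$ of $G$, $r(x|Q)-r(y|Q)\neq\lambda(1,\dots,1)$ for every integer $\lambda$. $\psi(G)$ denotes the minimum size of a doubly resolving set of $G$. *)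

From mathcomp Require Import all_boot all_order all_algebra.
Set Implicit Arguments. Unset Strict Implicit. Unset Printing Implicit Defensive.
Import GRing.Theory Num.Theory.

(* A graph is a (symmetric, irreflexive) adjacency relation e on a finite
   vertex type T. *)

Definition walk_len {T : finType} (e : rel T) (m : nat) (u v : T) : bool :=
  [exists p : m.-tuple T, path e u p && (last u p == v)].

(* Shortest-path distance: the least m such that a walk of length m from u
   to v exists (searched over 0..#|T|-1, which suffices in a connected
   graph: a shortest path has at most #|T|-1 edges). *)
Definition gdist {T : finType} (e : rel T) (u v : T) : nat :=
  find (fun m => walk_len e m u v) (iota 0 #|T|).

Definition cycle_rel (n : nat) : rel 'I_n :=
  fun i j => ((i.+1 %% n) == j) || ((j.+1 %% n) == i).

Definition path_rel (k : nat) : rel 'I_k :=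
  fun i j => (i.+1 == j) || (j.+1 == i).

Definition cart_rel {T1 T2 : finType} (e1 : rel T1) (e2 : rel T2)
  : rel (T1 * T2) :=
  fun x y => ((x.2 == y.2) && e1 x.1 y.1) || ((x.1 == y.1) && e2 x.2 y.2).

Definition doubly_resolving {T : finType} (e : rel T) (Q : {set T}) : Prop :=
  forall x y : T, x != y ->
    ~ (exists lam : int, forall q, q \in Q ->
          ((gdist e x q)%:Z - (gdist e y q)%:Z)%R = lam).

Definition psi_eq {T : finType} (e : rel T) (m : nat) : Prop :=
  (exists Q : {set T}, doubly_resolving e Q /\ #|Q| = m) /\
  (forall Q : {set T}, doubly_resolving e Q -> m <= #|Q|).

From mathcomp Require Import all_boot all_order all_algebra zify.

(* Distances in C_n □ P_k add up: d((i,j),(i',j')) = d_C(i,i') + |j - j'|,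
   where both summands are identified with [gdist] through their BFS layering.
   Three landmarks suffice: (0,0) and (0,k-1) fix the path coordinate, because
   |j - 0| + |j - (k-1)| is constant, and then (0,0) together with the antipode
   (⌊n/2⌋,0) fixes the cycle coordinate, because for odd n the difference
   d_C(i,0) - d_C(i,⌊n/2⌋) takes distinct values for distinct i.  Two landmarks a, b
   never suffice: if they share their cycle coordinate, two vertices of one layer
   C_n × {j} are not separated; if neither lies on the top (resp. bottom) layer,
   the two topmost (resp. bottommost) vertices of a path fibre are not separated;
   otherwise, say a = (a1,0) and b = (b1,k-1) with a1 ≠ b1, take (b1,0) and (w,1)
   with w the neighbour of b1 towards a1. *)

Set Implicit Arguments. Unset Strict Implicit. Unset Printing Implicit Defensive.

Section DistanceSpec.
Variables (T : finType) (e : rel T).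

Record dist_spec (v : T) (D : T -> nat) : Prop := DistSpec {
  dist_spec_target : D v = 0;
  dist_spec_eq0 : forall u, D u = 0 -> u = v;
  dist_spec_edge : forall u w, e u w -> D u <= (D w).+1;
  dist_spec_step : forall u m, D u = m.+1 -> exists2 w, e u w & D w = m;
  dist_spec_bound : forall u, D u < #|T| }.

Variables (v : T) (D : T -> nat).
Hypothesis DP : dist_spec v D.

Lemma dist_spec_path_ge u p : path e u p -> D u <= size p + D (last u p).
Proof.
elim: p u => [//|w p IHp] u /= /andP[euw /IHp]; have := dist_spec_edge DP euw; lia.
Qed.

Lemma walk_len_dist_spec m u : D u = m -> walk_len e m u v.
Proof.
elim: m u => [|m IHm] u Dm.
  by apply/existsP; exists [tuple]; rewrite /= (dist_spec_eq0 DP Dm).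
have [w euw /IHm /existsP[p /andP[pw lastp]]] := dist_spec_step DP Dm.
by apply/existsP; exists (cons_tuple w p); rewrite /= euw pw.
Qed.

Lemma walk_len_dist_spec_ge u m : walk_len e m u v -> D u <= m.
Proof.
case/existsP=> p /andP[/dist_spec_path_ge le_Dp /eqP lastp].
by rewrite lastp (dist_spec_target DP) size_tuple addn0 in le_Dp.
Qed.

Lemma gdist_dist_spec u : gdist e u v = D u.
Proof.
have has_walk : has (fun m => walk_len e m u v) (iota 0 #|T|).
  apply/hasP; exists (D u); last exact: walk_len_dist_spec.
  by rewrite mem_iota (dist_spec_bound DP).
have find_lt := has_walk; rewrite has_find size_iota in find_lt.
apply/eqP; rewrite /gdist eqn_leq; apply/andP; split.
  rewrite leqNgt; apply/negP => lt_find.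
  have := before_find 0 lt_find.
  by rewrite nth_iota ?add0n ?(walk_len_dist_spec (erefl _)) ?(dist_spec_bound DP).
by have := nth_find 0 has_walk; rewrite nth_iota // add0n; apply: walk_len_dist_spec_ge.
Qed.

End DistanceSpec.

Lemma cart_dist_spec (T1 T2 : finType) (e1 : rel T1) (e2 : rel T2)
    (v1 : T1) (v2 : T2) (D1 : T1 -> nat) (D2 : T2 -> nat) :
  dist_spec e1 v1 D1 -> dist_spec e2 v2 D2 ->
  dist_spec (cart_rel e1 e2) (v1, v2) (fun x => D1 x.1 + D2 x.2).
Proof.
move=> [D1v D1_eq0 D1_edge D1_step D1_lt] [D2v D2_eq0 D2_edge D2_step D2_lt].
split=> [|[u1 u2]|[u1 u2] [w1 w2]|[u1 u2] m|[u1 u2]] /=.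
- by rewrite D1v D2v.
- by move=> /eqP; rewrite addn_eq0 => /andP[/eqP/D1_eq0-> /eqP/D2_eq0->].
- by rewrite /cart_rel /= => /orP[] /andP[/eqP<- e_uw];
    [rewrite -addSn leq_add2r (D1_edge _ _ e_uw) | rewrite -addnS leq_add2l (D2_edge _ _ e_uw)].
- case: (posnP (D1 u1)) => [D1u0|D1u_gt0] Dm.
    have [w2 e_uw2 D2w] := D2_step u2 m ltac:(lia).
    by exists (u1, w2); rewrite /cart_rel ?eqxx ?e_uw2 ?orbT //= D1u0 D2w.
  have [w1 e_uw1 D1w] := D1_step u1 (D1 u1).-1 ltac:(lia).
  by exists (w1, u2); rewrite /cart_rel ?eqxx ?e_uw1 //=; lia.
- by rewrite card_prod; have := D1_lt u1; have := D2_lt u2; nia.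
Qed.

Definition cdist (n i j : nat) : nat := minn `|i - j| (n - `|i - j|).

Lemma modn_succ n i : i < n -> i.+1 %% n = if i.+1 == n then 0 else i.+1.
Proof. by move=> lt_in; case: eqP => [->|ne]; rewrite ?modnn // modn_small; lia. Qed.

Lemma val_ordS n (i : 'I_n) : ordS i = (if i.+1 == n then 0 else i.+1) :> nat.
Proof. exact: modn_succ. Qed.

Lemma val_ord_pred n (i : 'I_n) : ord_pred i = (if i == 0 :> nat then n.-1 else i.-1) :> nat.
Proof.
have lt_in := ltn_ord i; rewrite /= -subn1.
case: eqP => [->|ne]; first by rewrite modn_small; lia.
by rewrite (_ : i + n - 1 = i - 1 + n) ?modnDr ?modn_small; lia.
Qed.

Lemma cycle_rel_ordS n (i : 'I_n) : cycle_rel i (ordS i).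
Proof. by rewrite /cycle_rel eqxx. Qed.

Lemma cycle_rel_ord_pred n (i : 'I_n) : cycle_rel i (ord_pred i).
Proof. by apply/orP; right; apply/eqP; exact: (congr1 val (ord_predK i)). Qed.

Lemma cycle_dist_spec n (t : 'I_n) : dist_spec (@cycle_rel n) t (fun i => cdist n i t).
Proof.
have lt_tn := ltn_ord t; rewrite /cdist.
split=> [|i|i w|i m|i] /=; first lia; have lt_in := ltn_ord i.
- by move=> d0; apply: val_inj => /=; lia.
- by have lt_wn := ltn_ord w; case/orP=> /eqP; rewrite modn_succ //; case: eqP; lia.
- move=> dS; have [dSi|dPi] : cdist n (ordS i) t = m \/ cdist n (ord_pred i) t = m.
    by rewrite /cdist val_ordS val_ord_pred; case: eqP; case: eqP; lia.
  + by exists (ordS i); rewrite ?cycle_rel_ordS.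
  + by exists (ord_pred i); rewrite ?cycle_rel_ord_pred.
- by rewrite card_ord; lia.
Qed.

Lemma path_dist_spec k (t : 'I_k) : dist_spec (@path_rel k) t (fun i => `|i - t|).
Proof.
have lt_tk := ltn_ord t.
split=> [|i|i w|i m|i] /=; first lia.
- by move=> d0; apply: val_inj => /=; lia.
- by rewrite /path_rel => /orP[] /eqP; lia.
- move=> dS; have lt_ik := ltn_ord i; case: (ltnP i t) => [lt_it|le_ti].
  + have Si : ordS i = i.+1 :> nat by rewrite val_ordS ifN //; lia.
    by exists (ordS i); rewrite /path_rel Si; lia.
  + have Pi : ord_pred i = i.-1 :> nat by rewrite val_ord_pred ifN //; lia.
    by exists (ord_pred i); rewrite /path_rel Pi; lia.
- by have := ltn_ord i; rewrite card_ord; lia.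
Qed.

Lemma card_le2_sub_pair (T : finType) (x0 : T) (Q : {set T}) :
  #|Q| <= 2 -> exists a b : T, Q \subset [set a; b].
Proof.
rewrite leq_eqVlt ltnS leq_eqVlt ltnS leqn0.
case/or3P=> [/cards2P[a [b [_ ->]]] | /cards1P[a ->] | ].
- by exists a, b.
- by exists a, a; rewrite setUid.
- by rewrite cards_eq0 => /eqP->; exists x0, x0; apply: sub0set.
Qed.

Lemma not_doubly_resolving_sub_pair (T : finType) (e : rel T) (Q : {set T}) (a b x y : T) :
  Q \subset [set a; b] -> x != y ->
  gdist e x a + gdist e y b = gdist e y a + gdist e x b -> ~ doubly_resolving e Q.
Proof.
move=> /subsetP sub_Qab ne_xy eq_diff Qres; apply: (Qres x y ne_xy).
exists ((gdist e x a)%:Z - (gdist e y a)%:Z)%R => q /sub_Qab.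
by rewrite !inE => /orP[] /eqP->; lia.
Qed.

Lemma gdist_cyl n k (x y : 'I_n * 'I_k) :
  gdist (cart_rel (@cycle_rel n) (@path_rel k)) x y = cdist n x.1 y.1 + `|x.2 - y.2|.
Proof.
case: y => y1 y2.
exact: gdist_dist_spec (cart_dist_spec (cycle_dist_spec y1) (path_dist_spec y2)) x.
Qed.

Lemma cycle_relC n : symmetric (@cycle_rel n).
Proof. by move=> i j; rewrite /cycle_rel orbC. Qed.

Lemma cdist_antipode_inj n i j : ~~ odd n -> i <= n -> j <= n ->
  cdist n.+1 i 0 + cdist n.+1 j n./2 = cdist n.+1 j 0 + cdist n.+1 i n./2 -> i = j.
Proof.
move=> n_even; have := odd_double_half n; rewrite (negbTE n_even) add0n.
rewrite /cdist; lia.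
Qed.

Section Cylinder.
Variables n k : nat.
Hypotheses (n_gt0 : 0 < n) (k_gt0 : 0 < k).

Local Notation vertex := ('I_n.+1 * 'I_k.+1)%type.
Local Notation d := (gdist (cart_rel (@cycle_rel n.+1) (@path_rel k.+1))).

Lemma cyl_far_pair_unresolved (a1 b1 : 'I_n.+1) : a1 != b1 ->
  exists x y : vertex, x != y /\
    d x (a1, ord0) + d y (b1, ord_max) = d y (a1, ord0) + d x (b1, ord_max).
Proof.
move=> ne_ab; have [_ a1_eq0 _ a1_step _] := cycle_dist_spec a1.
have [b1_0 b1_eq0 b1_edge _ _] := cycle_dist_spec b1; rewrite /= in b1_0.
have b1a1_gt0 : 0 < cdist n.+1 b1 a1.
  by rewrite lt0n; apply: contra ne_ab => /eqP/a1_eq0->.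
have [w e_bw dw] : exists2 w, cycle_rel b1 w & cdist n.+1 w a1 = (cdist n.+1 b1 a1).-1.
  by apply: a1_step; lia.
have dwb : cdist n.+1 w b1 = 1.
  have := b1_edge w b1; rewrite cycle_relC e_bw b1_0 => /(_ isT).
  case: (posnP (cdist n.+1 w b1)) => [/b1_eq0 w_b1|]; last lia.
  by move: dw; rewrite w_b1; lia.
exists (b1, ord0), (w, inord 1); split.
  by apply/eqP => /(congr1 (fun v => val v.2)) /=; rewrite inordK.
rewrite !gdist_cyl /= inordK // b1_0 dwb; lia.
Qed.

Lemma cyl_pair_unresolved (a b : vertex) :
  exists x y : vertex, x != y /\ d x a + d y b = d y a + d x b.
Proof.
case: a b => [a1 a2] [b1 b2]; have := ltn_ord a2; have := ltn_ord b2.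
rewrite !ltnS => le_b2k le_a2k.
case: (eqVneq a1 b1) => [<-|ne_ab].
  exists (ord0, ord0), (ord_max, ord0); split; last by rewrite !gdist_cyl /=; lia.
  by apply/eqP => /(congr1 (fun v => val v.1)) /=; lia.
case: (boolP ((a2 < k) && (b2 < k))) => [/andP[lt_a2k lt_b2k] | ].
  exists (ord0, ord_max), (ord0, inord k.-1); split.
    by apply/eqP => /(congr1 (fun v => val v.2)) /=; rewrite inordK; lia.
  by rewrite !gdist_cyl /= inordK; lia.
case: (boolP ((0 < a2) && (0 < b2))) => [/andP[a2_gt0 b2_gt0] | ].
  exists (ord0, ord0), (ord0, inord 1); split.
    by apply/eqP => /(congr1 (fun v => val v.2)) /=; rewrite inordK.
  by rewrite !gdist_cyl /= inordK; lia.
rewrite !negb_and -!leqNgt !leqn0 => a2b2_0 a2b2_k.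
have [[a2_0 b2_k] | [a2_k b2_0]] :
    (a2 = 0 :> nat /\ b2 = k :> nat) \/ (a2 = k :> nat /\ b2 = 0 :> nat) by lia.
- have -> : a2 = ord0 by apply: val_inj.
  have -> : b2 = ord_max by apply: val_inj.
  exact: cyl_far_pair_unresolved.
- have -> : a2 = ord_max by apply: val_inj.
  have -> : b2 = ord0 by apply: val_inj.
  rewrite eq_sym in ne_ab; have [x [y [ne_xy eq_xy]]] := cyl_far_pair_unresolved ne_ab.
  by exists x, y; split; last lia.
Qed.

Lemma cyl_doubly_resolving_card_ge3 (Q : {set vertex}) :
  doubly_resolving (cart_rel (@cycle_rel n.+1) (@path_rel k.+1)) Q -> 3 <= #|Q|.
Proof.
move=> Qres; rewrite leqNgt ltnS; apply/negP => /(card_le2_sub_pair (ord0, ord0)).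
case=> a [b sub_Qab]; have [x [y [ne_xy eq_xy]]] := cyl_pair_unresolved a b.
exact: not_doubly_resolving_sub_pair sub_Qab ne_xy eq_xy Qres.
Qed.

Hypothesis n_even : ~~ odd n.

Definition cyl_basis : {set vertex} :=
  [set (ord0, ord0); (ord0, ord_max); (inord n./2, ord0)].

Lemma card_cyl_basis : #|cyl_basis| = 3.
Proof.
have half_pos : 0 < n./2.
  by rewrite half_gt0 ltn_neqAle n_gt0 andbT; apply: contraNneq n_even => <-.
unfold cyl_basis; rewrite -setUA !cardsU1 cards1 !inE !xpair_eqE -!val_eqE /=.
by rewrite inordK; lia.
Qed.

Lemma cyl_basis_doubly_resolving :
  doubly_resolving (cart_rel (@cycle_rel n.+1) (@path_rel k.+1)) cyl_basis.
Proof.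
move=> [x1 x2] [y1 y2] ne_xy [lam eq_lam].
have := eq_lam (ord0, ord0); have := eq_lam (ord0, ord_max).
have := eq_lam (inord n./2, ord0); rewrite !inE !eqxx ?orbT !gdist_cyl /= inordK; last lia.
move=> /(_ isT) d_half /(_ isT) d_top /(_ isT) d_bot.
have := ltn_ord x1; have := ltn_ord y1; have := ltn_ord x2; have := ltn_ord y2.
rewrite !ltnS => le_y2k le_x2k le_y1n le_x1n.
have x2_y2 : x2 = y2 :> nat by lia.
have x1_y1 : x1 = y1 :> nat by apply: (cdist_antipode_inj n_even); lia.
by move: ne_xy; rewrite (val_inj x1_y1) (val_inj x2_y2) eqxx.
Qed.

End Cylinder.

Theorem theorem3p1 (n k : nat) :
  3 <= n -> odd n -> 3 <= k ->
  psi_eq (cart_rel (@cycle_rel n) (@path_rel k)) 3.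
Proof.
case: n => [//|n] n_ge3 /= n_even; case: k => [//|k] k_ge3.
have n_gt0 : 0 < n by lia.
have k_gt0 : 0 < k by lia.
split; last exact: cyl_doubly_resolving_card_ge3.
exists (cyl_basis n k); split; [exact: cyl_basis_doubly_resolving | exact: card_cyl_basis].
Qed.
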